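(* For every nonempty standard subset $J\subseteq\{1,\dots,t\}$ one has $\mathrm{Ext}^1_{\mathcal A_{t,1}}(\Delta(J),\Delta(J))=0$.
   Context: Let $k$ be an algebraically closed field and $t\ge 3$ an integer. $\mathcal A_{t,1}$ is the quotient of the path algebra over $k$ of the quiver with vertices $1,\dots,t$, arrows $\alpha_i:i\to i+1$ ($1\le i\le t-1$) and $\beta_j:j+2\to j$ ($1\le j\le t-2$), by the relations $\beta_1\alpha_2=0$ and $\beta_{i+1}\alpha_{i+2}=\alpha_i\beta_i$ for $1\le i\le t-3$ (compositions of linear maps, written right to left). Modules are finite-dimensional and identified with representations $(M_i;\alpha_i,\beta_j)$ of the quiver satisfying these relations. A subset $J\subseteq\{1,\dots,t\}$ is standard if $j\in J$ implies $j+1\notin J$. For a nonempty standard subset $J$, the standard module $\Delta(J)$ has $\Delta(J)_i=k^{l}$ where $l=\#\{j\in J: j\le i\}$, with standard basis $e_1,\dots,e_l$; each $\alpha_i$ is the natural inclusion $e_h\mapsto e_h$, and each $\beta_j$ sends $e_h\mapsto e_{h-1}$ for $h\ge 2$ and $e_1\mapsto 0$. *)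

From HB Require Import structures.
From mathcomp Require Import all_boot all_order all_algebra.
Set Implicit Arguments. Unset Strict Implicit. Unset Printing Implicit Defensive.
Import GRing.Theory.
Local Open Scope ring_scope.

(* Representations of the quiver of A_{t,1}: vertices are natural numbers
   (only 1..t are used, see [is_module]); alpha i : i -> i+1, beta j : j+2 -> j.
   Linear maps are matrices acting on ROW vectors: v |-> v *m A.
   Hence the composite "g o f" (right to left) is the matrix  F *m G. *)
Record rep (k : fieldType) := Rep {
  rdim : nat -> nat;
  ralpha : forall i : nat, 'M[k]_(rdim i, rdim i.+1);
  rbeta : forall j : nat, 'M[k]_(rdim j.+2, rdim j) }.

(* M is an A_{t,1}-module: supported on vertices 1..t, and satisfies
   beta_1 alpha_2 = 0 and beta_{i+1} alpha_{i+2} = alpha_i beta_i (1 <= i <= t-3). *)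
Definition is_module (k : fieldType) (t : nat) (M : rep k) : Prop :=
  [/\ (forall i, (i == 0)%N || (t < i)%N -> rdim M i = 0%N),
      ralpha M 2 *m rbeta M 1 = 0 &
      (forall i, (1 <= i)%N -> (i + 3 <= t)%N ->
         ralpha M i.+2 *m rbeta M i.+1 = rbeta M i *m ralpha M i)].

Definition is_hom (k : fieldType) (M N : rep k)
  (phi : forall i, 'M[k]_(rdim M i, rdim N i)) : Prop :=
  (forall i, ralpha M i *m phi i.+1 = phi i *m ralpha N i) /\
  (forall j, rbeta M j *m phi j = phi j.+2 *m rbeta N j).

(* Ext^1_{A_{t,1}}(M, N) = 0 : every short exact sequence 0 -> N -> E -> M -> 0
   of A_{t,1}-modules splits. *)
Definition Ext1_zero (k : fieldType) (t : nat) (M N : rep k) : Prop :=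
  forall (E : rep k) (f : forall i, 'M[k]_(rdim N i, rdim E i))
         (g : forall i, 'M[k]_(rdim E i, rdim M i)),
    is_module t E -> is_hom f -> is_hom g ->
    (forall i, [&& row_free (f i), row_full (g i) & (f i == kermx (g i))%MS]) ->
    exists s : forall i, 'M[k]_(rdim M i, rdim E i),
      is_hom s /\ forall i, s i *m g i = 1%:M.

Definition standard (t : nat) (J : seq nat) : Prop :=
  (forall j, j \in J -> (1 <= j <= t)%N) /\
  (forall j, j \in J -> j.+1 \notin J).

Definition delta_dim (t : nat) (J : seq nat) (i : nat) : nat :=
  if (1 <= i <= t)%N then count (fun j => j \in J) (iota 1 i) else 0%N.

(* alpha: natural inclusion e_h |-> e_h ; beta: e_h |-> e_{h-1}, e_1 |-> 0
   (0-indexed rows/columns). *)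
Definition Delta (k : fieldType) (t : nat) (J : seq nat) : rep k :=
  @Rep k (delta_dim t J)
    (fun i => \matrix_(a, b) ((nat_of_ord a == nat_of_ord b)%:R : k))
    (fun j => \matrix_(a, b) ((nat_of_ord a == (nat_of_ord b).+1)%:R : k)).

From HB Require Import structures.
From mathcomp Require Import all_boot all_order all_algebra all_field.
Set Implicit Arguments. Unset Strict Implicit. Unset Printing Implicit Defensive.
Import GRing.Theory.
Local Open Scope ring_scope.

(* A section of g : E -> Delta(J) is built on basis vectors, vertex by vertex.  The h-th
   basis vector of Delta(J)_(i+2) is either the alpha-image of the h-th basis
   vector at vertex i+1, and is lifted as the alpha-image of its lift, or it is
   new (i+2 is in J).  In the latter case standardness forces
   dim Delta(J)_(i+2) = dim Delta(J)_i + 1, so beta_i of Delta(J) is onto; a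
   snake-lemma argument then shows that E_(i+2) maps onto the pullback of
   Delta(J)_(i+2) and E_i over Delta(J)_i, so the new vector has a lift whose
   beta-image is the lift already chosen at vertex i.  The relations of E make
   the alpha-images of lifts compatible with beta as well. *)

Section PullbackLift.
Variables (k : fieldType) (np ep mp nq eq mq : nat).
Variables (fp : 'M[k]_(np, ep)) (gp : 'M[k]_(ep, mp)).
Variables (fq : 'M[k]_(nq, eq)) (gq : 'M[k]_(eq, mq)).
Variables (bN : 'M[k]_(np, nq)) (bE : 'M[k]_(ep, eq)) (bM : 'M[k]_(mp, mq)).
Hypotheses (gp_full : row_full gp) (fp_gp : fp *m gp = 0).
Hypothesis ker_gq : (kermx gq <= fq)%MS.
Hypotheses (bN_full : row_full bN)
  (f_comm : bN *m fq = fp *m bE) (g_comm : bE *m gq = gp *m bM).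

Lemma row_mx_sub_pullback (x : 'rV[k]_mp) (y : 'rV[k]_eq) :
  x *m bM = y *m gq -> (row_mx x y <= row_mx gp bE)%MS.
Proof.
move=> xy.
have /submxP[u x_u] : (x <= gp)%MS by rewrite submx_full.
have /submxP[d hd] : (u *m bE - y <= fq)%MS.
  apply: submx_trans ker_gq; apply/sub_kermxP.
  by rewrite mulmxBl -mulmxA g_comm mulmxA -x_u xy subrr.
have /row_fullP[T T_bN] := bN_full.
apply/submxP; exists (u - d *m T *m fp).
rewrite mul_mx_row !mulmxBl -x_u -!(mulmxA _ fp) fp_gp mulmx0 subr0.
by rewrite -f_comm mulmxA -(mulmxA d) T_bN mulmx1 -hd opprB addrC subrK.
Qed.

End PullbackLift.

Lemma eq_row_dim0 {k : fieldType} n (u v : 'rV[k]_n) : n = 0%N -> u = v.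
Proof. by move=> n0; apply/rowP => c; have := ltn_ord c; rewrite [X in (_ < X)%N]n0. Qed.

Section DeltaDim.
Variables (t : nat) (J : seq nat).
Local Notation l := (delta_dim t J).

Lemma delta_dim_gt i : (t < i)%N -> l i = 0%N.
Proof. by rewrite /delta_dim ltnNge => /negbTE->; rewrite andbF. Qed.

Lemma delta_dim_gt0 i : (0 < l i)%N -> (i <= t)%N.
Proof. by apply: contraTT; rewrite -ltnNge => /delta_dim_gt->. Qed.

Lemma delta_dimS i : (i < t)%N -> l i.+1 = (l i + (i.+1 \in J))%N.
Proof.
move=> lt_it; rewrite /delta_dim lt_it -[X in iota _ X]addn1 iotaD.
rewrite count_cat /= addn0 add1n.
by case: i lt_it => //= i /ltnW->.
Qed.

Lemma delta_dim_leS i : (i < t)%N -> (l i <= l i.+1)%N.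
Proof. by move/delta_dimS->; rewrite leq_addr. Qed.

Hypothesis J_std : standard t J.

Lemma delta_dimSS_le i : (l i.+2 <= (l i).+1)%N.
Proof.
have [lt_it|] := ltnP i.+1 t; last by move=> le_ti; rewrite (@delta_dim_gt i.+2).
rewrite !delta_dimS ?(ltnW lt_it) // -addnA -[(l i).+1]addn1 leq_add2l.
by case J1: (i.+1 \in J); [rewrite (negbTE (J_std.2 _ J1)) | case: (i.+2 \in J)].
Qed.

Lemma delta_dimSS_new i : (l i.+1 < l i.+2)%N -> l i.+2 = (l i).+1.
Proof.
move=> lt_l; have lt_it := delta_dim_gt0 (leq_ltn_trans (leq0n _) lt_l).
apply/eqP; rewrite eqn_leq delta_dimSS_le.
exact: leq_ltn_trans (delta_dim_leS (ltnW lt_it)) lt_l.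
Qed.

End DeltaDim.

Section DeltaMatrices.
Variables (k : fieldType) (t : nat) (J : seq nat).
Local Notation D := (Delta k t J).
Local Notation l := (delta_dim t J).

Definition unit_row n (a : nat) : 'rV[k]_n := \row_b ((b : nat) == a)%:R.

Lemma unit_row_mul n p (X : 'M[k]_(n, p)) a (lt_an : (a < n)%N) :
  unit_row n a *m X = row (Ordinal lt_an) X.
Proof.
rewrite rowE; congr (_ *m _); apply/rowP => b.
by rewrite !mxE eqxx /=.
Qed.

Lemma row_alpha_Delta i (a : 'I_(l i)) : row a (ralpha D i) = unit_row (l i.+1) a.
Proof. by apply/rowP => b; rewrite !mxE eq_sym. Qed.

Lemma row_beta_Delta j (a : 'I_(l j.+2)) :
  row a (rbeta D j) = if (a : nat) is a'.+1 then unit_row (l j) a' else 0.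
Proof. by case: a => [[|a] lt_a]; apply/rowP => b; rewrite !mxE // eqSS eq_sym. Qed.

Lemma row_full_beta_Delta i : l i.+2 = (l i).+1 -> row_full (rbeta D i).
Proof.
move=> l_new; apply/row_fullP.
pose T : 'M[k]_(l i, l i.+2) := \matrix_(b, c) ((c : nat) == (b : nat).+1)%:R.
exists T; apply/row_matrixP => b; rewrite row_mul row1.
have lt_b : ((b : nat).+1 < l i.+2)%N by rewrite l_new ltnS.
have -> : row b T = unit_row _ b.+1 by apply/rowP => c; rewrite !mxE.
by rewrite (unit_row_mul _ lt_b) row_beta_Delta; apply/rowP => c; rewrite !mxE.
Qed.

End DeltaMatrices.

Arguments unit_row {k} n a.
Arguments row_full_beta_Delta {k t J i}.

Section Splitting.
Variables (k : fieldType) (t : nat) (J : seq nat).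
Hypothesis J_std : standard t J.
Local Notation D := (Delta k t J).
Local Notation l := (delta_dim t J).
Variables (E : rep k) (f : forall i, 'M[k]_(l i, rdim E i))
  (g : forall i, 'M[k]_(rdim E i, l i)).
Hypotheses (E_module : is_module t E)
  (f_hom : @is_hom k D E f) (g_hom : @is_hom k E D g).
Hypothesis fg_exact : forall i,
  [&& row_free (f i), row_full (g i) & (f i == kermx (g i))%MS].

Lemma g_full i : row_full (g i).
Proof. by case/and3P: (fg_exact i). Qed.

Lemma f_g i : f i *m g i = 0.
Proof. by case/and3P: (fg_exact i) => _ _ /andP[/sub_kermxP]. Qed.

Lemma kermx_g_sub i : (kermx (g i) <= f i)%MS.
Proof. by case/and3P: (fg_exact i) => _ _ /andP[]. Qed.

Lemma rdimE_eq0 i : (i == 0)%N || (t < i)%N -> rdim E i = 0%N.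
Proof. by case: E_module => dimE0 _ _; apply: dimE0. Qed.

Definition beta_target i (A : nat -> 'rV[k]_(rdim E i)) (a : nat) :
    'rV[k]_(rdim E i) :=
  if a is a'.+1 then A a' else 0.

Definition next_lift i (A : nat -> 'rV[k]_(rdim E i))
    (B : nat -> 'rV[k]_(rdim E i.+1)) (a : nat) : 'rV[k]_(rdim E i.+2) :=
  if (a < l i.+1)%N then B a *m ralpha E i.+1
  else row_mx (unit_row (l i.+2) a) (beta_target A a)
         *m pinvmx (row_mx (g i.+2) (rbeta E i)).

(* [lift i a] lifts the a-th basis vector of Delta(J)_i to E_i; it is junk
   for [a >= l i]. *)
Fixpoint lift_pair i :
    (nat -> 'rV[k]_(rdim E i)) * (nat -> 'rV[k]_(rdim E i.+1)) :=
  if i is i'.+1 then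
    ((lift_pair i').2, next_lift (lift_pair i').1 (lift_pair i').2)
  else (fun=> 0, fun a => unit_row (l 1) a *m pinvmx (g 1)).

Definition lift i := (lift_pair i).1.

Lemma liftSS i : lift i.+2 = next_lift (lift i) (lift i.+1).
Proof. by []. Qed.

Lemma lift_old i a : (0 < i)%N -> (a < l i)%N -> lift i.+1 a = lift i a *m ralpha E i.
Proof. by case: i => // i _ lt_a; rewrite liftSS /next_lift lt_a. Qed.

Lemma lift_new i a :
    (forall b, (b < l i)%N -> lift i b *m g i = unit_row (l i) b) ->
    (l i.+1 <= a < l i.+2)%N ->
  lift i.+2 a *m g i.+2 = unit_row (l i.+2) a /\
  lift i.+2 a *m rbeta E i = beta_target (lift i) a.
Proof.
move=> lift_g /andP[le_a lt_a].
have l_new := delta_dimSS_new J_std (leq_ltn_trans le_a lt_a).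
have compat : unit_row (l i.+2) a *m rbeta D i = beta_target (lift i) a *m g i.
  rewrite (unit_row_mul _ lt_a) row_beta_Delta.
  case: a le_a lt_a => [|a] _ lt_a /=; first by rewrite mul0mx.
  by rewrite lift_g // -ltnS -l_new.
have := mulmxKpV (row_mx_sub_pullback (g_full _) (f_g _) (kermx_g_sub _)
  (row_full_beta_Delta l_new) (f_hom.2 i) (g_hom.2 i) compat).
by rewrite liftSS /next_lift ltnNge le_a mul_mx_row => /eq_row_mx.
Qed.

Lemma lift_g i a : (a < l i)%N -> lift i a *m g i = unit_row (l i) a.
Proof.
elim: i {-2}i (leqnn i) a => [|n IH] [|[|i]] // le_in a lt_a.
- by rewrite mulmxKpV // submx_full // g_full.
- have [lt_a1|le_a1] := ltnP a (l i.+1).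
    rewrite lift_old // -mulmxA g_hom.1 mulmxA IH //.
    by rewrite unit_row_mul row_alpha_Delta.
  by case: (@lift_new i a (IH i (ltnW le_in))); rewrite ?le_a1.
Qed.

Lemma lift_beta j a :
  (a < l j.+2)%N -> lift j.+2 a *m rbeta E j = beta_target (lift j) a.
Proof.
elim: j a => [|j IH] a lt_a; first by apply: eq_row_dim0; apply: rdimE_eq0.
have [lt_a2|le_a2] := ltnP a (l j.+2); last first.
  by case: (@lift_new j.+1 a (@lift_g j.+1)); rewrite ?le_a2.
rewrite lift_old // -mulmxA.
case: E_module j IH lt_a lt_a2 => _ alpha2_beta1 alpha_beta [|j] IH lt_a lt_a2.
  rewrite alpha2_beta1 mulmx0; case: a lt_a lt_a2 => // a _.
  by move=> /leq_trans/(_ (delta_dimSS_le J_std 0)).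
have le_jt : (j.+4 <= t)%N by apply: delta_dim_gt0 (leq_ltn_trans (leq0n a) lt_a).
rewrite alpha_beta ?addn3 // mulmxA IH //.
case: a lt_a lt_a2 => [|a] _ lt_a2 /=; first by rewrite mul0mx.
by rewrite [RHS]lift_old // -ltnS (leq_trans lt_a2 (delta_dimSS_le J_std _)).
Qed.

Definition section_mx i : 'M[k]_(l i, rdim E i) := \matrix_(a < l i) lift i a.

Lemma section_mx_hom : @is_hom k D E section_mx.
Proof.
split=> i; apply/row_matrixP => a; rewrite !row_mul rowK.
  rewrite row_alpha_Delta.
  have [lt_a1|le_a1] := ltnP a (l i.+1).
    rewrite (unit_row_mul _ lt_a1) rowK lift_old //; last exact: (ltn_ord a).
    by case: i a lt_a1 => [[] //|].
  apply: eq_row_dim0; apply: rdimE_eq0; apply/orP; right.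
  rewrite ltnNge; apply: contraL le_a1 => lt_it.
  by rewrite -ltnNge (leq_trans (ltn_ord a)) ?delta_dim_leS.
rewrite row_beta_Delta lift_beta //.
case: a => [[|a] lt_a] /=; first by rewrite mul0mx.
have lt_ai : (a < l i)%N by rewrite -ltnS (leq_trans lt_a (delta_dimSS_le J_std _)).
by rewrite (unit_row_mul _ lt_ai) rowK.
Qed.

Lemma section_mxK i : section_mx i *m g i = 1%:M.
Proof.
apply/row_matrixP => a; rewrite row_mul rowK row1 lift_g //.
by apply/rowP => b; rewrite !mxE.
Qed.

End Splitting.

Lemma Ext1_zero_Delta (k : fieldType) (t : nat) (J : seq nat) :
  standard t J -> Ext1_zero t (Delta k t J) (Delta k t J).
Proof.
move=> J_std E f g E_module f_hom g_hom fg_exact.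
exists (section_mx g); split.
- exact (section_mx_hom J_std E_module f_hom g_hom fg_exact).
- exact (section_mxK J_std f_hom g_hom fg_exact).
Qed.

Theorem theorem2p3 (k : closedFieldType) (t : nat) (J : seq nat) :
  (3 <= t)%N -> J != [::] -> standard t J ->
  Ext1_zero t (Delta k t J) (Delta k t J).
Proof. by move=> _ _; apply: Ext1_zero_Delta. Qed.
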